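(* Let $S$ be a finite generating subset of a group $G$ with $1\in S$ and $|S|\ge3$. Assume that either $G$ is infinite or $\alpha_2(S)\le\alpha_{-2}(S)$. Let $H$ be a $2$-atom of $S$ with $1\in H$ and $|\Pi^l(H)|=1$. Then $|H|\le|S|-1$.
   Context: For a group $G$ and $S\subseteq G$, $\mathrm{Cay}(G,S)$ is the graph on $G$ with arcs $(x,y)$, $x^{-1}y\in S$; the image of $X$ is $XS$. For a reflexive locally finite graph $\Gamma=(V,E)$, $\partial(X)=\Gamma(X)\setminus X$; $\Gamma$ is $k$-separable if some finite $X$ has $|X|\ge k$ and $|V\setminus\Gamma(X)|\ge k$; then $\kappa_k(\Gamma)=\min\{|\partial(X)|: X\text{ finite},|X|\ge k,|V\setminus\Gamma(X)|\ge k\}$, a $k$-fragment is such an $X$ attaining the minimum, a $k$-atom is a $k$-fragment of minimum cardinality, $\alpha_k(\Gamma)$ its cardinality. If $\Gamma$ is not $k$-separable and $|V|\ge 2k-1$, by convention $\kappa_k(\Gamma)=|V|-2k+1$ and every $k$-subset is a $k$-fragment and $k$-atom. For $S$ with $1\in S$, these notions for $S$ refer to $\mathrm{Cay}(\langle S\rangle,S)$, and $\alpha_{-k}(S)=\alpha_k(\mathrm{Cay}(\langle S\rangle,S^{-1}))$. $\Pi^l(X)=\{x\in G: xX=X\}$. *)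

From Stdlib Require Import List Arith Lia.
Import ListNotations.

Set Implicit Arguments.

Record is_group (T : Type) (mul : T -> T -> T) (inv : T -> T) (e : T) : Prop := {
  grp_assoc : forall x y z, mul x (mul y z) = mul (mul x y) z;
  grp_mul1l : forall x, mul e x = x;
  grp_mul1r : forall x, mul x e = x;
  grp_mulVl : forall x, mul (inv x) x = e;
  grp_mulVr : forall x, mul x (inv x) = e
}.

Section Sets.
Variable T : Type.

Definition finite_set (X : T -> Prop) : Prop :=
  exists l : list T, forall x, X x <-> In x l.

Definition has_card (X : T -> Prop) (n : nat) : Prop :=
  exists l : list T, NoDup l /\ (forall x, X x <-> In x l) /\ length l = n.

Definition at_least (X : T -> Prop) (k : nat) : Prop :=
  exists l : list T, NoDup l /\ length l = k /\ (forall x, In x l -> X x).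

Definition complement (X : T -> Prop) : T -> Prop := fun x => ~ X x.

End Sets.

Section Cayley.
Variables (T : Type) (mul : T -> T -> T) (inv : T -> T) (e : T).

Inductive generated (S : T -> Prop) : T -> Prop :=
  | gen_in : forall s, S s -> generated S s
  | gen_one : generated S e
  | gen_mul : forall x y, generated S x -> generated S y -> generated S (mul x y)
  | gen_inv : forall x, generated S x -> generated S (inv x).

Definition inv_set (S : T -> Prop) : T -> Prop := fun y => S (inv y).

(* Image Gamma(X) = XS in Cay(G,S) *)
Definition img (S X : T -> Prop) : T -> Prop :=
  fun y => exists x s, X x /\ S s /\ y = mul x s.

Definition bnd (S X : T -> Prop) : T -> Prop :=
  fun y => img S X y /\ ~ X y.

(* X finite, |X| >= k, |V \ Gamma(X)| >= k ; the vertex set V is all of T *)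
Definition admissible (S : T -> Prop) (k : nat) (X : T -> Prop) : Prop :=
  finite_set X /\ at_least X k /\ at_least (complement (img S X)) k.

Definition separable (S : T -> Prop) (k : nat) : Prop :=
  exists X, admissible S k X.

(* k-fragments, including the convention for non-separable graphs *)
Definition fragment (S : T -> Prop) (k : nat) (X : T -> Prop) : Prop :=
  (separable S k /\ admissible S k X /\
     forall Y nX nY, admissible S k Y -> has_card (bnd S X) nX ->
                     has_card (bnd S Y) nY -> nX <= nY)
  \/
  (~ separable S k /\ (exists nV, has_card (fun _ : T => True) nV /\ 2 * k - 1 <= nV)
     /\ has_card X k).

Definition atom (S : T -> Prop) (k : nat) (X : T -> Prop) : Prop :=
  fragment S k X /\
  forall Y nX nY, fragment S k Y -> has_card X nX -> has_card Y nY -> nX <= nY.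

Definition alpha (S : T -> Prop) (k : nat) (a : nat) : Prop :=
  exists X, atom S k X /\ has_card X a.

Definition left_period (X : T -> Prop) : T -> Prop :=
  fun x => forall y, X y <-> exists h, X h /\ y = mul x h.

End Cayley.

From Stdlib Require Import List Arith Lia Classical ClassicalEpsilon Wf_nat.
Import ListNotations.
Set Implicit Arguments.
Unset Strict Implicit.

(* If Cay(G,S) is not 2-separable, H is a 2-subset and |S| >= 3 suffices.
   Otherwise let k = |d(H)| = kappa_2(S) and argue as follows.
   (1) Every h in H is h = h's with h' in H \ {h} and s in S ("s labels h"):
       otherwise H \ {h} would be a smaller 2-fragment.
   (2) Intersection property: if |H n xH| >= 2 then xH = H.  By submodularity
       of the boundary, |d(H n xH)| <= k as soon as |d(H u xH)| >= k, and then
       H n xH is a fragment, hence as large as H.  The bound on H u xH is clear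
       if H u xH is 2-admissible; otherwise G is finite, and duality (the
       complement of HS is a 2-fragment of S^-1) together with
       alpha_2(S) <= alpha_-2(S) gives 2|H| + k <= |G|, which suffices.
   (3) As Pi^l(H) = {1}, (2) shows that a label determines the point it labels,
       so the labels inject H into S \ {1}. *)

(* Classical decidability of every proposition: it lets us count the points
   of an arbitrary predicate along a finite list. *)
Definition pdec (P : Prop) : {P} + {~ P} := excluded_middle_informative P.

Definition ind {T : Type} (P : T -> Prop) (x : T) : nat := if pdec (P x) then 1 else 0.

Fixpoint cnt {T : Type} (U : list T) (P : T -> Prop) : nat :=
  match U with [] => 0 | x :: U' => ind P x + cnt U' P end.

Ltac unfold_inds :=
  unfold ind; repeat match goal with |- context [pdec ?P] => destruct (pdec P) end.

Definition setI {T : Type} (X Y : T -> Prop) : T -> Prop := fun y => X y /\ Y y.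
Definition setU {T : Type} (X Y : T -> Prop) : T -> Prop := fun y => X y \/ Y y.

Section Counting.
Variable T : Type.
Implicit Types (P Q : T -> Prop) (U : list T).

Lemma ind1 P x : P x -> ind P x = 1.
Proof. unfold ind; destruct (pdec (P x)); tauto. Qed.

Lemma ind0 P x : ~ P x -> ind P x = 0.
Proof. unfold ind; destruct (pdec (P x)); tauto. Qed.

Lemma cnt_add_le U P1 P2 Q1 Q2 :
  (forall x, In x U -> ind P1 x + ind P2 x <= ind Q1 x + ind Q2 x) ->
  cnt U P1 + cnt U P2 <= cnt U Q1 + cnt U Q2.
Proof.
  induction U as [|a U IH]; simpl; intros Hpt; [lia|].
  specialize (Hpt a (or_introl eq_refl)) as Ha.
  assert (cnt U P1 + cnt U P2 <= cnt U Q1 + cnt U Q2) by (apply IH; auto). lia.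
Qed.

Lemma cnt_le U P Q : (forall x, In x U -> P x -> Q x) -> cnt U P <= cnt U Q.
Proof.
  induction U as [|a U IH]; simpl; intros Hsub; [lia|].
  assert (ind P a <= ind Q a) by (unfold_inds; auto; exfalso; eauto).
  assert (cnt U P <= cnt U Q) by (apply IH; auto). lia.
Qed.

Lemma cnt_lt U P Q y :
  (forall x, In x U -> P x -> Q x) -> In y U -> Q y -> ~ P y -> cnt U P < cnt U Q.
Proof.
  induction U as [|a U IH]; simpl; intros Hsub Hy Qy Py; [tauto|].
  assert (Ha : ind P a <= ind Q a) by (unfold_inds; auto; exfalso; eauto).
  destruct Hy as [<-|Hy].
  - assert (cnt U P <= cnt U Q) by (apply cnt_le; auto).
    rewrite (ind1 Qy), (ind0 Py). lia.
  - assert (cnt U P < cnt U Q) by (apply IH; auto). lia.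
Qed.

Lemma cnt_complement U P : cnt U P + cnt U (complement P) = length U.
Proof.
  induction U as [|a U IH]; simpl; auto.
  unfold complement in *; unfold_inds; tauto || lia.
Qed.

Lemma cnt_union_inter U P Q : cnt U (setU P Q) + cnt U (setI P Q) = cnt U P + cnt U Q.
Proof.
  induction U as [|a U IH]; simpl; auto.
  unfold setU, setI in *; unfold_inds; tauto || lia.
Qed.

Lemma cnt_diff U P Q :
  (forall x, Q x -> P x) -> cnt U (fun x => P x /\ ~ Q x) + cnt U Q = cnt U P.
Proof.
  intros Hsub. induction U as [|a U IH]; simpl; auto.
  specialize (Hsub a); unfold_inds; tauto || lia.
Qed.

Definition fb P (x : T) : bool := if pdec (P x) then true else false.

Lemma cnt_filter U P : cnt U P = length (filter (fb P) U).
Proof.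
  induction U as [|a U IH]; simpl; auto.
  rewrite IH; unfold ind, fb; destruct (pdec (P a)); reflexivity.
Qed.

Lemma In_filter_fb U P x : In x (filter (fb P) U) <-> In x U /\ P x.
Proof.
  rewrite filter_In; unfold fb; destruct (pdec (P x)); intuition discriminate.
Qed.

Lemma has_card_unique P a b : has_card P a -> has_card P b -> a = b.
Proof.
  intros [l1 [N1 [E1 <-]]] [l2 [N2 [E2 <-]]].
  apply Nat.le_antisymm; apply NoDup_incl_length; auto; intros x Hx.
  - apply E2, E1, Hx.
  - apply E1, E2, Hx.
Qed.

Lemma card_cnt U P : NoDup U -> (forall x, P x -> In x U) -> has_card P (cnt U P).
Proof.
  intros NU Hsub. exists (filter (fb P) U). repeat split.
  - apply NoDup_filter; auto.
  - intros Px; apply In_filter_fb; auto.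
  - intros Hx; apply In_filter_fb in Hx; tauto.
  - symmetry; apply cnt_filter.
Qed.

Lemma has_card_cnt U P n :
  NoDup U -> (forall x, P x -> In x U) -> has_card P n -> n = cnt U P.
Proof. intros; eapply has_card_unique; eauto using card_cnt. Qed.

Lemma cnt_single U x : NoDup U -> In x U -> cnt U (fun z => z = x) = 1.
Proof.
  intros NU Ux. symmetry; apply has_card_cnt; auto; [intros z ->; auto|].
  exists [x]; repeat split; [constructor; auto using NoDup_nil| |]; simpl; intuition.
Qed.

Lemma has_card_one_eq P a b : has_card P 1 -> P a -> P b -> a = b.
Proof.
  intros [[|z [|z' l]] [_ [E L]]] Pa Pb; simpl in L; try lia.
  apply E in Pa as [<-|[]]; apply E in Pb as [<-|[]]; auto.
Qed.

Lemma has_card_finite P n : has_card P n -> finite_set P.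
Proof. intros [l [_ [E _]]]; exists l; auto. Qed.

Lemma finite_setU P Q : finite_set P -> finite_set Q -> finite_set (setU P Q).
Proof.
  intros [l1 E1] [l2 E2]; exists (l1 ++ l2); intros y.
  rewrite in_app_iff, <- E1, <- E2; reflexivity.
Qed.

Lemma finite_sub U P : (forall x, P x -> In x U) -> finite_set P.
Proof. intros Hsub. exists (filter (fb P) U). intros x; rewrite In_filter_fb; intuition. Qed.

Lemma at_least_cnt U P k :
  NoDup U -> (forall x, P x -> In x U) -> at_least P k -> k <= cnt U P.
Proof.
  intros NU Hsub [l [Nl [<- Hl]]]. rewrite cnt_filter. apply NoDup_incl_length; auto.
  intros x Hx; apply In_filter_fb; auto.
Qed.

Lemma cnt_at_least U P k : NoDup U -> k <= cnt U P -> at_least P k.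
Proof.
  intros NU Hk. rewrite cnt_filter in Hk. set (l := filter (fb P) U) in *.
  assert (Nl : NoDup l) by (apply NoDup_filter; auto).
  exists (firstn k l). repeat split.
  - apply NoDup_app_remove_r with (skipn k l). rewrite firstn_skipn; auto.
  - apply firstn_length_le; auto.
  - intros x Hx. assert (Hl : In x l) by (rewrite <- (firstn_skipn k l); apply in_or_app; auto).
    apply In_filter_fb in Hl; tauto.
Qed.

Lemma at_least_mono P Q k : at_least P k -> (forall x, P x -> Q x) -> at_least Q k.
Proof. intros [l [N [L I]]] Hsub; exists l; auto. Qed.

Lemma at_least_two P a b : a <> b -> P a -> P b -> at_least P 2.
Proof.
  intros D Pa Pb. exists [a; b]. repeat split.
  - constructor; [simpl; intuition | constructor; auto using NoDup_nil].
  - intros z [<-|[<-|[]]]; auto.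
Qed.

Lemma nodup_cover P (L : list T) :
  (forall x, P x -> In x L) -> exists U, NoDup U /\ forall x, P x -> In x U.
Proof.
  intros Hsub. exists (nodup (fun x y : T => pdec (x = y)) L).
  split; [apply NoDup_nodup|]. intros x Px; apply nodup_In; auto.
Qed.

Lemma finite_universe P U :
  (forall x, P x -> In x U) -> ~ at_least (complement P) 2 ->
  exists UG : list T, NoDup UG /\ forall z, In z UG.
Proof.
  intros Hsub Hsmall.
  destruct (classic (exists c, complement P c)) as [[c Pc]|Hnone].
  - destruct (@nodup_cover (fun _ => True) (c :: U)) as [UG [NG HG]].
    + intros z _. destruct (classic (P z)) as [Pz|Pz]; [right; auto|left].
      apply NNPP; intro D; apply Hsmall, (@at_least_two (complement P) c z D Pc Pz).
    + exists UG; auto.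
  - exists (nodup (fun x y : T => pdec (x = y)) U). split; [apply NoDup_nodup|].
    intros z; apply nodup_In, Hsub, NNPP; intro Pz; apply Hnone; exists z; auto.
Qed.

End Counting.

Section Group.
Variables (T : Type) (mul : T -> T -> T) (inv : T -> T) (e : T).
Hypothesis HG : is_group mul inv e.

Lemma mul_left_cancel x a b : mul x a = mul x b -> a = b.
Proof.
  intros E. rewrite <- (grp_mul1l HG a), <- (grp_mul1l HG b), <- (grp_mulVl HG x),
    <- !(grp_assoc HG), E; auto.
Qed.

Lemma inv_involutive x : inv (inv x) = x.
Proof. apply (@mul_left_cancel (inv x)). rewrite (grp_mulVr HG), (grp_mulVl HG); auto. Qed.

Lemma mulK x s : mul (mul x s) (inv s) = x.
Proof. rewrite <- (grp_assoc HG), (grp_mulVr HG), (grp_mul1r HG); auto. Qed.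

Lemma mulVK x s : mul (mul x (inv s)) s = x.
Proof. rewrite <- (grp_assoc HG), (grp_mulVl HG), (grp_mul1r HG); auto. Qed.

End Group.

Section Cayley.
Variables (T : Type) (mul : T -> T -> T) (inv : T -> T) (e : T).
Hypothesis HG : is_group mul inv e.

(* [bnd_lb S c]: every 2-admissible set has at least c boundary points,
   i.e. kappa_2(S) >= c. *)
Definition bnd_lb (S : T -> Prop) (c : nat) : Prop :=
  forall Z nZ, admissible mul S 2 Z -> has_card (bnd mul S Z) nZ -> c <= nZ.

Definition ltrans (x : T) (X : T -> Prop) : T -> Prop :=
  fun y => exists h, X h /\ y = mul x h.

Lemma img_mono S (X Y : T -> Prop) :
  (forall x, X x -> Y x) -> forall y, img mul S X y -> img mul S Y y.
Proof. intros Hsub y [x [s [Xx [Ss ->]]]]; exists x, s; auto. Qed.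

Lemma img_self S (X : T -> Prop) : S e -> forall x, X x -> img mul S X x.
Proof. intros Se x Xx; exists x, e; rewrite (grp_mul1r HG); auto. Qed.

Lemma img_universe S m (X : T -> Prop) :
  has_card S m -> finite_set X ->
  exists U, NoDup U /\ (forall y, img mul S X y -> In y U) /\ (forall y, X y -> In y U).
Proof.
  intros [lS [_ [ES _]]] [lX EX].
  destruct (@nodup_cover _ (fun y => img mul S X y \/ X y)
             (flat_map (fun x => map (mul x) lS) lX ++ lX)) as [U [NU HU]].
  - intros y [[x [s [Xx [Ss ->]]]]|Xy]; apply in_or_app; [left|right].
    + apply in_flat_map; exists x; split; [apply EX; auto|apply in_map, ES; auto].
    + apply EX; auto.
  - exists U; auto.
Qed.

(* A subset of a 2-admissible set with at least two points is 2-admissible: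
   shrinking X only enlarges the complement of XS. *)
Lemma admissible_subset S (X Z : T -> Prop) :
  admissible mul S 2 X -> (forall y, Z y -> X y) -> at_least Z 2 -> admissible mul S 2 Z.
Proof.
  intros [[l EX] [_ A2]] Hsub AZ. split; [|split; auto].
  - apply (@finite_sub _ l); intros y Zy; apply EX, Hsub, Zy.
  - eapply at_least_mono; [exact A2|]. intros z Cz Iz; apply Cz; revert Iz.
    apply img_mono; auto.
Qed.

Lemma bnd_cover S U (X : T -> Prop) :
  (forall y, img mul S X y -> In y U) -> forall y, bnd mul S X y -> In y U.
Proof. intros HU y [Iy _]; auto. Qed.

Lemma bnd_has_card S m (X : T -> Prop) :
  has_card S m -> finite_set X -> exists k, has_card (bnd mul S X) k.
Proof.
  intros HS FX. destruct (img_universe HS FX) as [U [NU [UI _]]].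
  exists (cnt U (bnd mul S X)). apply card_cnt, bnd_cover; auto.
Qed.

(* Left translation is a graph automorphism of Cay(G,S): it commutes with
   taking images and preserves sizes and boundary sizes. *)
Lemma img_ltrans S x (X : T -> Prop) y :
  img mul S (ltrans x X) y <-> ltrans x (img mul S X) y.
Proof.
  split.
  - intros [w [s [[h [Xh ->]] [Ss ->]]]]. exists (mul h s); split.
    + exists h, s; auto.
    + rewrite (grp_assoc HG); auto.
  - intros [z [[h [s [Xh [Ss ->]]]] ->]]. exists (mul x h), s.
    repeat split; [exists h; auto | auto | rewrite (grp_assoc HG); auto].
Qed.

Lemma has_card_ltrans x (P : T -> Prop) n : has_card P n -> has_card (ltrans x P) n.
Proof.
  intros [l [N [E L]]]. exists (map (mul x) l). repeat split.
  - apply NoDup_map_NoDup_ForallPairs; auto. intros a b _ _; apply (mul_left_cancel HG).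
  - intros [z [Pz ->]]; apply in_map, E; auto.
  - intros Hy; apply in_map_iff in Hy as [z [<- Hz]]; exists z; split; auto; apply E; auto.
  - rewrite length_map; auto.
Qed.

Lemma bnd_card_ltrans S x (X : T -> Prop) k :
  has_card (bnd mul S X) k -> has_card (bnd mul S (ltrans x X)) k.
Proof.
  intros Hk. destruct (has_card_ltrans x Hk) as [l [N [E L]]].
  exists l; split; [auto|split; [intros y; split; intros Hy|auto]].
  - apply E. destruct Hy as [Iy Ny]. apply img_ltrans in Iy as [z [Iz ->]].
    exists z; repeat split; auto. intros Xz; apply Ny; exists z; auto.
  - apply E in Hy as [z [[Iz Nz] ->]]. split.
    + apply img_ltrans; exists z; auto.
    + intros [h [Xh E']]; apply (mul_left_cancel HG) in E'; subst; auto.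
Qed.

Lemma cnt_bnd S U (X : T -> Prop) :
  S e -> cnt U (bnd mul S X) + cnt U X = cnt U (img mul S X).
Proof. intros Se; apply cnt_diff, img_self, Se. Qed.

Lemma bnd_submodular S U (X Y : T -> Prop) :
  cnt U (bnd mul S (setI X Y)) + cnt U (bnd mul S (setU X Y))
  <= cnt U (bnd mul S X) + cnt U (bnd mul S Y).
Proof.
  apply cnt_add_le; intros z _.
  assert (imgI : img mul S (setI X Y) z -> img mul S X z /\ img mul S Y z)
    by (intros Iz; split; revert Iz; apply img_mono; intros w []; auto).
  assert (imgJ : img mul S (setU X Y) z -> img mul S X z \/ img mul S Y z)
    by (intros [u [s [[Xu|Yu] [Ss ->]]]]; [left|right]; exists u, s; auto).
  unfold bnd, setI, setU in *; unfold_inds; tauto || lia.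
Qed.

Lemma img_complement_img (A B X : T -> Prop) :
  (forall s, A s -> B (inv s)) ->
  forall y, img mul A (complement (img mul B X)) y -> ~ X y.
Proof.
  intros HAB y [w [s [Nw [As ->]]]] Xy. apply Nw.
  exists (mul w s), (inv s); repeat split; auto. rewrite (mulK HG); auto.
Qed.

Lemma left_period_unit (X : T -> Prop) : left_period mul X e.
Proof.
  intros y; split.
  - intros Xy; exists y; rewrite (grp_mul1l HG); auto.
  - intros [h [Xh ->]]; rewrite (grp_mul1l HG); auto.
Qed.

Definition pred_label (S H : T -> Prop) (h s : T) : Prop :=
  exists h', H h' /\ h' <> h /\ S s /\ h = mul h' s.

(* If every point of H has a label and no label is shared by two points,
   then labels embed H into S \ {1}, so |H| + 1 <= |S|. *)
Lemma card_bound_of_labels (S H : T -> Prop) m n :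
  S e -> has_card S m -> has_card H n ->
  (forall h, H h -> exists s, pred_label S H h s) ->
  (forall h1 h2 s, H h1 -> H h2 -> pred_label S H h1 s -> pred_label S H h2 s -> h1 = h2) ->
  n + 1 <= m.
Proof.
  intros Se [lS [NS [ES <-]]] [lH [NH [EH <-]]] Hlab Huniq.
  set (lab := fun h => epsilon (inhabits e) (pred_label S H h)).
  assert (Hlab' : forall h, H h -> pred_label S H h (lab h))
    by (intros h Hh; apply (epsilon_spec (inhabits e)), Hlab, Hh).
  assert (Nlab : NoDup (e :: map lab lH)).
  { constructor.
    - intros Hin. apply in_map_iff in Hin as [h [Eh Ih]]. apply EH in Ih.
      destruct (Hlab' h Ih) as [h' [_ [D [_ Eq]]]].
      rewrite Eh, (grp_mul1r HG) in Eq. auto.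
    - apply NoDup_map_NoDup_ForallPairs; auto.
      intros h1 h2 I1 I2 Eq. apply EH in I1; apply EH in I2.
      apply (Huniq h1 h2 (lab h2)); auto. rewrite <- Eq; auto. }
  assert (Hincl : length (e :: map lab lH) <= length lS).
  { apply NoDup_incl_length; auto. intros z [<-|Hz]; apply ES; auto.
    apply in_map_iff in Hz as [h [<- Ih]]. apply EH in Ih.
    destruct (Hlab' h Ih) as [? [_ [_ [? _]]]]; auto. }
  simpl in Hincl; rewrite length_map in Hincl. lia.
Qed.

End Cayley.

Lemma atom_exists T (mul : T -> T -> T) (S' A0 : T -> Prop) c0 :
  fragment mul S' 2 A0 -> has_card A0 c0 -> exists b, b <= c0 /\ alpha mul S' 2 b.
Proof.
  intros F C.
  set (Psize := fun c => exists Z, fragment mul S' 2 Z /\ has_card Z c).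
  destruct (@dec_inh_nat_subset_has_unique_least_element Psize) as [b [[[A [FA CA]] Mb] _]].
  - intros c; apply classic.
  - exists c0, A0; auto.
  - exists b; split; [apply Mb; exists A0; auto|].
    exists A; repeat split; auto.
    intros Y nX nY FY CX CY. rewrite (has_card_unique CX CA). apply Mb; exists Y; auto.
Qed.

Section FiniteGroup.
Variables (T : Type) (mul : T -> T -> T) (inv : T -> T) (e : T).
Hypothesis HG : is_group mul inv e.
Variable UG : list T.
Hypothesis NUG : NoDup UG.
Hypothesis UGall : forall x, In x UG.

(* Passing to the complement of the image exchanges S and S^-1: for a
   2-admissible X of the B-graph, the complement C of XB is 2-admissible in
   the A-graph (A <= B^-1) and d_A(C) <= d_B(X), since CA avoids X. *)
Lemma complement_img_dual (A B X : T -> Prop) :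
  (forall s, A s -> B (inv s)) -> admissible mul B 2 X ->
  admissible mul A 2 (complement (img mul B X)) /\
  cnt UG (bnd mul A (complement (img mul B X))) <= cnt UG (bnd mul B X).
Proof.
  intros HAB [_ [AX AC]].
  pose proof (@img_complement_img _ _ _ _ HG A B X HAB) as Avoid.
  split; [split; [|split]|].
  - apply (@finite_sub _ UG); auto.
  - exact AC.
  - eapply at_least_mono; [exact AX|]. intros x Xx Ix; eapply Avoid; eauto.
  - apply cnt_le. intros y _ [Iy Ny]. split; [apply NNPP; auto | eapply Avoid; eauto].
Qed.

Lemma complement_img_fragment S (X : T -> Prop) k :
  admissible mul S 2 X -> has_card (bnd mul S X) k -> bnd_lb mul S k ->
  fragment mul (inv_set inv S) 2 (complement (img mul S X)).
Proof.
  intros AX Hk Hmin.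
  assert (cover : forall P : T -> Prop, forall x, P x -> In x UG) by auto.
  destruct (@complement_img_dual (inv_set inv S) S X) as [Adm L1]; auto.
  left; split; [exists (complement (img mul S X)); auto|]; split; auto.
  intros Y nX nY AY HnX HnY.
  destruct (@complement_img_dual S (inv_set inv S) Y) as [AdmY L2]; auto.
  { intros s Ss; unfold inv_set; rewrite (inv_involutive HG); auto. }
  pose proof (Hmin _ _ AdmY (card_cnt NUG (cover _))).
  rewrite (has_card_cnt NUG (cover _) HnX), (has_card_cnt NUG (cover _) HnY).
  pose proof (has_card_cnt NUG (cover _) Hk). lia.
Qed.

End FiniteGroup.

Section Atom.
Variables (T : Type) (mul : T -> T -> T) (inv : T -> T) (e : T).
Hypothesis HG : is_group mul inv e.
Variables (S : T -> Prop) (m : nat).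
Hypothesis HS : has_card S m.

Variables (H : T -> Prop) (n k : nat).
Hypothesis Hatom : atom mul S 2 H.
Hypothesis Hsep : separable mul S 2.
Hypothesis Hn : has_card H n.
Hypothesis Hk : has_card (bnd mul S H) k.

Lemma atom_admissible : admissible mul S 2 H.
Proof. destruct Hatom as [[[_ [A _]]|[NS _]] _]; [exact A | contradiction]. Qed.

Lemma atom_bnd_lb : bnd_lb mul S k.
Proof.
  destruct Hatom as [[[_ [_ Hmin]]|[NS _]] _]; [|tauto].
  intros Z nZ AZ CZ; apply (Hmin Z k nZ); auto.
Qed.

Lemma atom_min_size Z z c :
  admissible mul S 2 Z -> has_card Z z -> has_card (bnd mul S Z) c -> c <= k -> n <= z.
Proof.
  intros AZ Hz Hc Hck. apply (proj2 Hatom Z); auto.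
  left; split; [exact Hsep|split; [exact AZ|]]. intros Y nX nY AY CX CY.
  rewrite (has_card_unique CX Hc). pose proof (atom_bnd_lb AY CY). lia.
Qed.

(* Every point of an atom of size >= 3 is entered by an arc from another point
   of the atom: otherwise removing it keeps the set admissible without
   increasing the boundary, contradicting minimality. *)
Lemma atom_point_has_label : 3 <= n -> forall h, H h -> exists s, pred_label mul S H h s.
Proof.
  intros Hn3 h Hh. apply NNPP; intro Nlab.
  set (Y := fun y => H y /\ ~ y = h).
  destruct (img_universe mul HS (has_card_finite Hn)) as [U [NU [UI UH]]].
  assert (cY : cnt U Y + 1 = n).
  { rewrite <- (cnt_single NU (UH h Hh)), (has_card_cnt NU UH Hn).
    apply cnt_diff; intros ? ->; auto. }
  assert (AY : admissible mul S 2 Y).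
  { apply (admissible_subset atom_admissible); [intros y []; auto|].
    apply (cnt_at_least NU); lia. }
  assert (bY : cnt U (bnd mul S Y) <= k).
  { rewrite (has_card_cnt NU (bnd_cover UI) Hk). apply cnt_le.
    intros y _ [Iy Ny]. split; [revert Iy; apply img_mono; intros ? []; auto|].
    intros Hy. assert (y = h) by (apply NNPP; intro; apply Ny; split; auto). subst y.
    destruct Iy as [u [s [[Hu Du] [Ss Eq]]]]. apply Nlab; exists s, u; auto. }
  assert (UY : forall y, Y y -> In y U) by (intros y [Hy _]; auto).
  assert (UIY : forall y, img mul S Y y -> In y U)
    by (intros y Iy; apply UI; revert Iy; apply img_mono; intros ? []; auto).
  pose proof (atom_min_size AY (card_cnt NU UY) (card_cnt NU (bnd_cover UIY)) bY).
  lia.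
Qed.

Lemma finite_union_translate x : finite_set (setU H (ltrans mul x H)).
Proof.
  apply finite_setU; eapply has_card_finite; [exact Hn | exact (has_card_ltrans HG x Hn)].
Qed.

Section Balanced.
Hypothesis HS1 : S e.
Hypothesis Hcase : ~ finite_set (fun _ : T => True) \/
  (forall a b, alpha mul S 2 a -> alpha mul (inv_set inv S) 2 b -> a <= b).

(* In a finite group where alpha_2(S) <= alpha_{-2}(S), the atom, its
   boundary, and a 2-fragment of S^-1 of size >= |H| fit disjointly in G. *)
Lemma atom_double_bound (UG : list T) :
  NoDup UG -> (forall x, In x UG) -> 2 * n + k <= length UG.
Proof.
  intros NUG UGall.
  assert (cover : forall P : T -> Prop, forall x, P x -> In x UG) by auto.
  pose proof (complement_img_fragment HG NUG UGall atom_admissible Hk atom_bnd_lb) as Fdual.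
  destruct (atom_exists Fdual (card_cnt NUG (cover _))) as [b [Hb Hab]].
  assert (Hnb : n <= b).
  { destruct Hcase as [Inf|Halpha]; [exfalso; apply Inf; exists UG; split; auto|].
    apply Halpha; auto. exists H; auto. }
  pose proof (cnt_complement UG (img mul S H)).
  pose proof (cnt_bnd HG UG H HS1).
  rewrite <- (has_card_cnt NUG (cover _) Hn), <- (has_card_cnt NUG (cover _) Hk) in *.
  lia.
Qed.

(* If the translate xH meets H in at least two points then the union
   J = H u xH has at least kappa_2 boundary points: either J is admissible,
   or G is finite and J S covers all but one point of G. *)
Lemma atom_union_bnd x U :
  at_least (setI H (ltrans mul x H)) 2 -> NoDup U ->
  (forall y, img mul S (setU H (ltrans mul x H)) y -> In y U) ->
  k <= cnt U (bnd mul S (setU H (ltrans mul x H))).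
Proof.
  set (Y := ltrans mul x H). set (J := setU H Y). intros AI NU UI.
  assert (AJ : at_least J 2) by (eapply at_least_mono; [exact AI|]; intros y []; left; auto).
  assert (CJ := card_cnt NU (bnd_cover UI)).
  destruct (classic (at_least (complement (img mul S J)) 2)) as [Big|Small].
  { apply (@atom_bnd_lb J _); [|exact CJ]. repeat split; auto. exact (finite_union_translate x). }
  destruct (finite_universe UI Small) as [UG [NUG UGall]].
  assert (cover : forall P : T -> Prop, forall x, P x -> In x UG) by auto.
  pose proof (atom_double_bound NUG UGall).
  pose proof (cnt_bnd HG UG J HS1).
  pose proof (cnt_complement UG (img mul S J)).
  assert (cnt UG (complement (img mul S J)) <= 1).
  { destruct (Nat.le_gt_cases (cnt UG (complement (img mul S J))) 1) as [|G2]; auto.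
    exfalso; apply Small, (cnt_at_least NUG); lia. }
  pose proof (cnt_union_inter UG H Y).
  pose proof (at_least_cnt NUG (cover _) AI).
  pose proof (has_card_unique CJ (card_cnt NUG (cover _))).
  pose proof (has_card_cnt NUG (cover _) Hn).
  pose proof (has_card_cnt NUG (cover _) (has_card_ltrans HG x Hn)).
  unfold J, Y in *; lia.
Qed.

(* Intersection property of atoms: a translate of H sharing at least two
   points with H equals H.  By submodularity I = H n xH has at most kappa_2
   boundary points, hence |I| >= |H|. *)
Lemma atom_translate_eq x : at_least (setI H (ltrans mul x H)) 2 -> left_period mul H x.
Proof.
  intros AI.
  destruct (img_universe mul HS (finite_union_translate x)) as [U [NU [UI UJ]]].
  assert (UH : forall y, H y -> In y U) by (intros; apply UJ; left; auto).
  assert (UY : forall y, (ltrans mul x H) y -> In y U) by (intros; apply UJ; right; auto).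
  assert (UIH : forall y, img mul S H y -> In y U)
    by (intros y Iy; apply UI; revert Iy; apply img_mono; intros ? ?; left; auto).
  assert (UIY : forall y, img mul S (ltrans mul x H) y -> In y U)
    by (intros y Iy; apply UI; revert Iy; apply img_mono; intros ? ?; right; auto).
  assert (UI0 : forall y, setI H (ltrans mul x H) y -> In y U) by (intros y [Hy _]; auto).
  assert (UII : forall y, img mul S (setI H (ltrans mul x H)) y -> In y U)
    by (intros y Iy; apply UIH; revert Iy; apply img_mono; intros ? []; auto).
  assert (AdmI : admissible mul S 2 (setI H (ltrans mul x H)))
    by (apply (admissible_subset atom_admissible); [intros y []|]; auto).
  pose proof (bnd_submodular mul S U H (ltrans mul x H)).
  pose proof (atom_union_bnd AI NU UI).
  pose proof (atom_bnd_lb AdmI (card_cnt NU (bnd_cover UII))).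
  pose proof (has_card_cnt NU (bnd_cover UIH) Hk).
  pose proof (has_card_cnt NU (bnd_cover UIY) (bnd_card_ltrans HG x Hk)).
  assert (Hsize : n <= cnt U (setI H (ltrans mul x H))).
  { apply (atom_min_size AdmI (card_cnt NU UI0) (card_cnt NU (bnd_cover UII))); lia. }
  assert (nH := has_card_cnt NU UH Hn).
  assert (nY := has_card_cnt NU UY (has_card_ltrans HG x Hn)).
  intros y; split; intros Hy; apply NNPP; intro Ny.
  - assert (cnt U (setI H (ltrans mul x H)) < cnt U H)
      by (apply cnt_lt with (y := y); [intros ? _ []| | |intros []]; auto).
    lia.
  - assert (cnt U (setI H (ltrans mul x H)) < cnt U (ltrans mul x H))
      by (apply cnt_lt with (y := y); [intros ? _ []| | |intros []]; auto).
    lia.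
Qed.

(* With a trivial left period, no label is shared by two points of the atom:
   if h1 = h1's and h2 = h2's, then x = h1 h2^-1 maps the two points h2, h2'
   of H to h1, h1' in H, so x is a period, hence x = 1. *)
Lemma atom_label_unique :
  has_card (left_period mul H) 1 ->
  forall h1 h2 s, H h1 -> H h2 -> pred_label mul S H h1 s -> pred_label mul S H h2 s -> h1 = h2.
Proof.
  intros HPi h1 h2 s H1 H2 [h1' [H1' [D1 [_ E1]]]] [h2' [H2' [_ [_ E2]]]].
  set (x := mul h1 (inv h2)).
  assert (Eh1 : h1 = mul x h2) by (unfold x; rewrite (mulVK HG); auto).
  assert (Eh1' : h1' = mul x h2').
  { unfold x. rewrite <- (mulK HG h2' s), <- E2, (grp_assoc HG), (mulVK HG), E1, (mulK HG); auto. }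
  assert (Px : left_period mul H x).
  { apply atom_translate_eq, (@at_least_two _ _ h1 h1'); auto; split; auto.
    - exists h2; auto.
    - exists h2'; auto. }
  rewrite Eh1, (has_card_one_eq HPi Px (left_period_unit HG H)), (grp_mul1l HG); auto.
Qed.

End Balanced.

End Atom.

Unset Implicit Arguments.

Theorem mainTheorem12 (T : Type) (mul : T -> T -> T) (inv : T -> T) (e : T)
  (HG : is_group mul inv e)
  (S : T -> Prop) (m : nat)
  (HSgen : forall x, generated mul inv e S x)
  (HS1 : S e) (HScard : has_card S m) (HS3 : 3 <= m)
  (Hcase : ~ finite_set (fun _ : T => True) \/
           (forall a b, alpha mul S 2 a -> alpha mul (inv_set inv S) 2 b -> a <= b))
  (H : T -> Prop) (HH : atom mul S 2 H) (HH1 : H e)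
  (HPi : has_card (left_period mul H) 1) :
  forall n, has_card H n -> n <= m - 1.
Proof.
  intros n Hn.
  (* If Cay(G,S) is not 2-separable, the 2-atoms are the 2-subsets. *)
  destruct (proj1 HH) as [[Hsep _]|[_ [_ H2]]].
  2: { rewrite (has_card_unique Hn H2); lia. }
  destruct (Nat.le_gt_cases n 2) as [|Hn3]; [lia|].
  destruct (bnd_has_card mul HScard (has_card_finite Hn)) as [k Hk].
  (* Each point of H carries a label from S \ {1}, and distinct points carry
     distinct labels. *)
  pose proof (card_bound_of_labels HG HS1 HScard Hn
    (atom_point_has_label HScard HH Hsep Hn Hk Hn3)
    (atom_label_unique HG HScard HH Hsep Hn Hk HS1 Hcase HPi)).
  lia.
Qed.
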